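(* Let $\mathfrak S$ be a commutative semiring and $\sigma_{\mathfrak S}$ a set of ideals of $\mathfrak S$ with the ideal topology. Then $\sigma_{\mathfrak S}$ is sober if and only if, for every ideal $\mathfrak a$ of $\mathfrak S$ such that the subbasic closed set $\mathfrak a^{\uparrow}$ is non-empty and irreducible, one has $\bigcap\{\mathfrak x\in\sigma_{\mathfrak S}\mid \mathfrak a\subseteq\mathfrak x\}\in\sigma_{\mathfrak S}$.
   Context: A semiring $(\mathfrak S,+,0,\cdot,1)$ has $(\mathfrak S,+,0)$ a commutative monoid, $(\mathfrak S,\cdot,1)$ a monoid, $0r=r0=0$, and two-sided distributivity; all semirings are commutative. An ideal is a nonempty proper subset closed under addition and under multiplication by elements of $\mathfrak S$. For an ideal $\mathfrak a$, $\mathfrak a^{\uparrow}=\{\mathfrak x\in\sigma_{\mathfrak S}\mid\mathfrak a\subseteq\mathfrak x\}$; the ideal topology on $\sigma_{\mathfrak S}$ has the sets $\mathfrak a^{\uparrow}$ ($\mathfrak a$ any ideal) as a subbasis of closed sets. A space is sober if every non-empty irreducible closed subset is the closure of a unique point. *)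

From HB Require Import structures.
From mathcomp Require Import all_boot all_algebra.
From mathcomp Require Import boolp classical_sets.
Set Implicit Arguments. Unset Strict Implicit. Unset Printing Implicit Defensive.
Import GRing.Theory.
Local Open Scope ring_scope.
Local Open Scope classical_set_scope.

(* Commutative semiring: comPzSemiRingType (0 = 1 allowed, as in the paper). *)
Section IdealTopology.
Variable S : comPzSemiRingType.

Definition ideal (a : set S) : Prop :=
  [/\ a !=set0, a != setT,
      (forall x y, a x -> a y -> a (x + y)) &
      (forall r x, a x -> a (r * x))].

Variable sigma : set (set S).

Definition upset (a : set S) : set (set S) := [set x | sigma x /\ a `<=` x].

Definition fin_union_subbasic (D : set (set S)) : Prop :=
  exists (n : nat) (f : 'I_n -> set S),
    (forall i, ideal (f i)) /\ D = [set x | exists i, upset (f i) x].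

(* closed sets of the topology generated by the subbasis of closed sets
   { a^uparrow | a ideal }: arbitrary intersections (within sigma) of
   finite unions of subbasic closed sets. *)
Definition ideal_closed (C : set (set S)) : Prop :=
  exists F : set (set (set S)),
    (forall D, F D -> fin_union_subbasic D) /\
    C = sigma `&` [set x | forall D, F D -> D x].

Definition irreducible (C : set (set S)) : Prop :=
  forall C1 C2, ideal_closed C1 -> ideal_closed C2 ->
    C `<=` C1 `|` C2 -> C `<=` C1 \/ C `<=` C2.

Definition pt_closure (x : set S) : set (set S) :=
  [set y | sigma y /\ forall C, ideal_closed C -> C x -> C y].

Definition sober : Prop :=
  forall C, ideal_closed C -> C !=set0 -> irreducible C ->
    exists! x, sigma x /\ C = pt_closure x.

End IdealTopology.

From HB Require Import structures.
From mathcomp Require Import all_boot all_algebra.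
From mathcomp Require Import boolp classical_sets.
Local Open Scope ring_scope.
Local Open Scope classical_set_scope.
Import GRing.Theory.

(* The closed sets of the ideal topology are upward closed in sigma and each
   a^uparrow is closed, so the closure of a point x is x^uparrow, and sober
   means that every non-empty irreducible closed set C equals x^uparrow for a
   unique x in sigma.  Irreducibility lets C, inside each finite union of
   subbasic sets containing it, pass into a single a^uparrow; hence
   C = b^uparrow for b the intersection of C, which is the only candidate for
   the generic point. *)

Set Implicit Arguments.

Section IdealTopologyFacts.
Variables (S : comPzSemiRingType) (sigma : set (set S)).
Hypothesis sigma_ideal : forall x, sigma x -> ideal x.

Lemma ideal0 (a : set S) : ideal a -> a 0.
Proof. by case=> [[w aw] _ _ aM]; rewrite -(mul0r w); apply: aM. Qed.

Lemma bigcap_ideal (C : set (set S)) :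
  C !=set0 -> (forall x, C x -> ideal x) -> ideal (\bigcap_(x in C) x).
Proof.
move=> [c Cc] C_ideal; split.
- by exists 0 => x /C_ideal /ideal0.
- apply/eqP => capT; have [_ /eqP cNT _ _] := C_ideal _ Cc; apply: cNT.
  apply/seteqP; split => // s _.
  by have /(_ c Cc) : (\bigcap_(x in C) x) s by rewrite capT.
- move=> s t sC tC x Cx; have [_ _ xD _] := C_ideal _ Cx.
  by apply: xD; [apply: sC | apply: tC].
- by move=> r s sC x Cx; have [_ _ _ xM] := C_ideal _ Cx; apply: xM; apply: sC.
Qed.

Lemma fin_union_subbasic_closed (D : set (set S)) :
  fin_union_subbasic sigma D -> ideal_closed sigma D.
Proof.
move=> Dfin; exists [set D]; split; first by move=> _ ->.
case: Dfin => n [f [_ ->]]; apply/seteqP; split => x /=.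
- by move=> [i [sx fx]]; split=> // _ ->; exists i.
- by move=> [_ /(_ _ erefl)].
Qed.

Lemma upset_closed (a : set S) : ideal a -> ideal_closed sigma (upset sigma a).
Proof.
move=> a_ideal; apply: fin_union_subbasic_closed; exists 1%N, (fun=> a).
split=> //; apply/seteqP; split => x /=; first by exists ord0.
by case.
Qed.

Lemma ideal_closed_sub (C : set (set S)) : ideal_closed sigma C -> C `<=` sigma.
Proof. by case=> F [_ ->] x []. Qed.

Lemma ideal_closed_upward (C : set (set S)) x y :
  ideal_closed sigma C -> C x -> sigma y -> x `<=` y -> C y.
Proof.
case=> F [Ffin ->] [_ xF] sy xy; split=> // D FD.
have [n [f [_ DE]]] := Ffin D FD.
move: (xF D FD); rewrite DE => -[i [_ fx]].
by exists i; split=> //; apply: subset_trans xy.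
Qed.

Lemma pt_closureE x : sigma x -> pt_closure sigma x = upset sigma x.
Proof.
move=> sx; apply/seteqP; split => y /=.
- by move=> [sy]; apply; [exact: upset_closed (sigma_ideal sx) | split].
- move=> [sy xy]; split=> // C Cclosed Cx.
  exact: ideal_closed_upward Cclosed Cx sy xy.
Qed.

Lemma upset_inj x y : sigma x -> sigma y -> upset sigma x = upset sigma y -> x = y.
Proof.
move=> sx sy xy; apply/seteqP; split.
- by have [] : upset sigma x y by rewrite xy; split.
- by have [] : upset sigma y x by rewrite -xy; split.
Qed.

Lemma bigcap_upset x : sigma x -> \bigcap_(y in upset sigma x) y = x.
Proof.
move=> sx; apply/seteqP; split => s /=; first by apply; split.
by move=> xs y [_]; apply.
Qed.

Lemma irreducible_fin_union (C : set (set S)) n (f : 'I_n -> set S) :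
  C !=set0 -> irreducible sigma C -> (forall i, ideal (f i)) ->
  C `<=` [set x | exists i, upset sigma (f i) x] ->
  exists i, C `<=` upset sigma (f i).
Proof.
move=> [c Cc] Cirr; elim: n f => [|n IHn] f f_ideal Cf.
  by case: (Cf c Cc) => -[].
pose g (i : 'I_n) := f (lift ord0 i).
have g_closed : ideal_closed sigma [set x | exists i, upset sigma (g i) x].
  by apply: fin_union_subbasic_closed; exists n, g; split=> // i; apply: f_ideal.
case: (Cirr _ _ (upset_closed (f_ideal ord0)) g_closed).
- move=> x /Cf [i]; case: (unliftP ord0 i) => [j ->|->] fx; last by left.
  by right; exists j.
- by exists ord0.
- by move=> /(IHn g (fun i => f_ideal _)) [j Cg]; exists (lift ord0 j).
Qed.

Lemma irreducible_closed_upsetE (C : set (set S)) :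
  ideal_closed sigma C -> C !=set0 -> irreducible sigma C ->
  C = upset sigma (\bigcap_(x in C) x).
Proof.
move=> Cclosed C0 Cirr; have Csigma := ideal_closed_sub Cclosed.
apply/seteqP; split => y.
  by move=> Cy; split; [exact: Csigma | by move=> s; apply].
move=> [sy capy]; have [F [Ffin CE]] := Cclosed.
rewrite CE; split=> // D FD; have [n [f [f_ideal DE]]] := Ffin D FD.
have [|i Cf] := irreducible_fin_union f C0 Cirr f_ideal.
  by rewrite -DE CE => x [_]; apply.
rewrite DE; exists i; split=> // s fs; apply: capy => x /Cf [_]; exact.
Qed.

End IdealTopologyFacts.

Theorem theorem3p9 (S : comPzSemiRingType) (sigma : set (set S))
  (Hsigma : forall x, sigma x -> ideal x) :
  sober sigma <->
  (forall a : set S, ideal a ->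
     upset sigma a !=set0 -> irreducible sigma (upset sigma a) ->
     sigma (\bigcap_(x in upset sigma a) x)).
Proof.
split.
- move=> sigma_sober a a_ideal a0 a_irr.
  have [x [[sx aE] _]] := sigma_sober _ (upset_closed sigma a_ideal) a0 a_irr.
  by rewrite aE pt_closureE // bigcap_upset.
- move=> cap_generic C Cclosed C0 Cirr; set b := \bigcap_(x in C) x.
  have CE : C = upset sigma b := irreducible_closed_upsetE Cclosed C0 Cirr.
  have b_ideal : ideal b.
    by apply: bigcap_ideal => // x /(ideal_closed_sub Cclosed) /Hsigma.
  have sb : sigma b by move: (cap_generic _ b_ideal); rewrite -CE; apply.
  exists b; split; first by rewrite pt_closureE.
  move=> y [sy]; rewrite pt_closureE // => yE.
  by apply: (upset_inj sb sy); rewrite -CE.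
Qed.
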